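(* Let $t\ge 1$ and $r\ge 2$ be integers and let $\mathcal H$ be an $r$-uniform hypergraph with shadow graph $G$. (i) If $\mathcal H$ is Berge-$B_t$-free, then $G$ contains no copy of $B_{3rt}$ in which each of its $3rt$ triangles is the core of a Berge triangle in $\mathcal H$. (ii) If $\mathcal H$ is Berge-$F_t$-free, then $G$ contains no copy of $F_{3rt}$ in which each of its $3rt$ triangles is the core of a Berge triangle in $\mathcal H$.
   Context: The shadow graph of a hypergraph $\mathcal H$ is the graph on $V(\mathcal H)$ in which $xy$ is an edge iff some hyperedge contains both $x$ and $y$. A triangle $xyz$ of the shadow graph is the core of a Berge triangle in $\mathcal H$ if there are three distinct hyperedges $h_1,h_2,h_3$ of $\mathcal H$ with $\{x,y\}\subseteq h_1$, $\{y,z\}\subseteq h_2$, $\{x,z\}\subseteq h_3$. For a graph $F$, $\mathcal H$ contains a Berge-$F$ if there is an injection $\varphi:V(F)\to V(\mathcal H)$ and an injection $f:E(F)\to E(\mathcal H)$ with $\{\varphi(x),\varphi(y)\}\subseteq f(xy)$ for all $xy\in E(F)$; Berge-$F$-free means no Berge-$F$. The book $B_s$ has vertices $u,v,w_1,\dots,w_s$ and edges $uv,uw_i,vw_i$ ($1\le i\le s$); its triangles are $uvw_i$. The fan $F_s$ has vertices $u,v_1,\dots,v_s,w_1,\dots,w_s$ and edges $uv_i,uw_i,v_iw_i$ ($1\le i\le s$); its triangles are $uv_iw_i$. *)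

From mathcomp Require Import all_boot.
Set Implicit Arguments. Unset Strict Implicit. Unset Printing Implicit Defensive.

Definition uniform (V : finType) (r : nat) (H : {set {set V}}) : Prop :=
  forall h, h \in H -> #|h| = r.

Definition shadow_edge (V : finType) (H : {set {set V}}) (x y : V) : Prop :=
  x != y /\ exists h, [/\ h \in H, x \in h & y \in h].

Definition berge_triangle_core (V : finType) (H : {set {set V}}) (x y z : V) : Prop :=
  exists h1 h2 h3 : {set V},
    [/\ h1 \in H, h2 \in H & h3 \in H] /\
    [/\ h1 != h2, h2 != h3 & h1 != h3] /\
    [/\ (x \in h1) && (y \in h1), (y \in h2) && (z \in h2) & (x \in h3) && (z \in h3)].

(* A (simple) graph F on a finite vertex type W is given by its edge set
   EF : {set {set W}} of 2-element sets.  H contains a Berge-F. *)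
Definition berge_copy (W V : finType) (EF : {set {set W}}) (H : {set {set V}}) : Prop :=
  exists (phi : W -> V) (f : {set W} -> {set V}),
    [/\ injective phi, {in EF &, injective f} &
        forall e, e \in EF -> f e \in H /\ phi @: e \subset f e].

Definition berge_free (W V : finType) (EF : {set {set W}}) (H : {set {set V}}) : Prop :=
  ~ berge_copy EF H.

Definition shadow_copy (W V : finType) (EF : {set {set W}}) (H : {set {set V}})
  (phi : W -> V) : Prop :=
  injective phi /\
  forall x y, [set x; y] \in EF -> x != y -> shadow_edge H (phi x) (phi y).

(* Book B_s: vertices u = inl true, v = inl false, w_i = inr i. *)
Definition book_V (s : nat) : finType := (bool + 'I_s)%type.
Definition book (s : nat) : {set {set book_V s}} :=
  [set [set (inl true : book_V s); inl false]]
  :|: [set [set (inl true : book_V s); inr i] | i : 'I_s]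
  :|: [set [set (inl false : book_V s); inr i] | i : 'I_s].

(* Fan F_s: u = None, v_i = Some (true, i), w_i = Some (false, i). *)
Definition fan_V (s : nat) : finType := option (bool * 'I_s).
Definition fan (s : nat) : {set {set fan_V s}} :=
  [set [set (None : fan_V s); Some (true, i)] | i : 'I_s]
  :|: [set [set (None : fan_V s); Some (false, i)] | i : 'I_s]
  :|: [set [set (Some (true, i) : fan_V s); Some (false, i)] | i : 'I_s].

(* Fix, for every triangle i of the copy, three distinct hyperedges a_i, b_i, c_i realising
   it.  Each hyperedge of triangle i that gets used (b_i, c_i for the book; a_i, b_i, c_i for
   the fan) contains a vertex private to that triangle (w_i, resp. v_i or w_i).  Hence a set U
   of hyperedges meets the hyperedges of at most r |U| triangles: their private vertices are
   distinct and lie in the union of U, which has at most r |U| vertices.  While fewer than t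
   triangles are chosen, the hyperedges used so far (fewer than 3t, plus a_i0 for the book)
   block fewer than 3rt triangles, so a greedy choice yields t triangles with pairwise
   disjoint hyperedge sets.  Together with a_i0 on the spine uv of the book, these hyperedges
   form a Berge-B_t, resp. a Berge-F_t. *)

From mathcomp Require Import all_boot zify.
Set Implicit Arguments. Unset Strict Implicit. Unset Printing Implicit Defensive.

Definition berge_triangle (V : finType) (H : {set {set V}}) (x y z : V)
    (h1 h2 h3 : {set V}) : Prop :=
  [/\ h1 \in H, h2 \in H & h3 \in H] /\
  [/\ h1 != h2, h2 != h3 & h1 != h3] /\
  [/\ (x \in h1) && (y \in h1), (y \in h2) && (z \in h2) & (x \in h3) && (z \in h3)].

Lemma berge_triangle_choice (I V : finType) (H : {set {set V}}) (x y z : I -> V) :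
  (forall i, berge_triangle_core H (x i) (y i) (z i)) ->
  exists a b c : I -> {set V}, forall i, berge_triangle H (x i) (y i) (z i) (a i) (b i) (c i).
Proof.
move=> tri; have [a /fin_all_exists [b /fin_all_exists [c abc]]] := fin_all_exists tri.
by exists a, b, c.
Qed.

Lemma meet_not_disjoint (T : finType) (A B : {set T}) x :
  x \in A -> x \in B -> ~~ [disjoint A & B].
Proof. by move=> xA xB; apply/pred0Pn; exists x; rewrite /= xA xB. Qed.

Lemma imset_pair_sub (T T' : finType) (f : T -> T') x y (h : {set T'}) :
  (f x \in h) && (f y \in h) -> f @: [set x; y] \subset h.
Proof. by rewrite imsetU1 imset_set1 subUset !sub1set. Qed.

Section HittingBound.

Variables (I V : finType) (H : {set {set V}}) (r : nat).
Variables (E : I -> {set {set V}}) (P : I -> {set V}).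
Hypothesis H_uniform : uniform r H.
Hypothesis E_sub : forall i, E i \subset H.
Hypothesis P_disjoint : forall i j x, x \in P i -> x \in P j -> i = j.
Hypothesis P_meet : forall i h, h \in E i -> ~~ [disjoint P i & h].

(* Each family hitting U owns a private vertex in the union of U. *)
Lemma card_hitting_le (U : {set {set V}}) :
  #|[set i | ~~ [disjoint E i & U]]| <= r * #|U|.
Proof.
set S := [set i | _]; pose X := cover (U :&: H).
pose f i := [pick x in P i :&: X].
have fS i : i \in S -> exists2 x, f i = Some x & x \in P i.
  rewrite inE => /pred0Pn [h /andP [hE hU]].
  have [x xP xh] : exists2 x, x \in P i & x \in h.
    by move: (P_meet hE) => /pred0Pn [x /andP [xP xh]]; exists x.
  rewrite /f; case: pickP => [y /setIP [yP _]|/(_ x)]; first by exists y.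
  rewrite inE xP => /negbT/negP[]; apply/bigcupP; exists h => //.
  by rewrite inE; apply/andP; split => //; apply: (subsetP (E_sub i)).
have card_SX : #|S| <= #|X|.
  rewrite -(card_in_imset (f := f)); last first.
    move=> i j /fS [x -> xPi] /fS [y -> yPj] [xy].
    by apply: P_disjoint xPi _; rewrite xy.
  rewrite -[#|X|](card_imset _ (@Some_inj _)); apply: subset_leq_card.
  apply/subsetP => _ /imsetP [i /fS [x fi xP] ->]; rewrite fi; apply: imset_f.
  by move: fi; rewrite /f; case: pickP => // y /setIP [_ yX] [<-].
apply: leq_trans card_SX _; apply: leq_trans (leq_card_cover _).1 _.
rewrite (eq_bigr (fun _ => r)); last by move=> h /setIP [_ /H_uniform].
by rewrite sum_nat_const mulnC leq_mul2l subset_leq_card ?subsetIl ?orbT.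
Qed.

End HittingBound.

Section GreedySelection.

Variables (I T : finType) (E : I -> {set T}) (U0 : {set T}) (m r : nat).
Hypothesis E_neq0 : forall i, E i != set0.
Hypothesis card_E : forall i, #|E i| <= m.
Hypothesis card_hitting : forall U : {set T}, #|[set i | ~~ [disjoint E i & U]]| <= r * #|U|.

Definition separated (S : {set I}) : Prop :=
  (forall i, i \in S -> [disjoint E i & U0]) /\
  {in S &, forall i j, i != j -> [disjoint E i & E j]}.

Lemma separated_extend S :
  separated S -> r * (#|U0| + m * #|S|) < #|I| ->
  exists2 i, i \notin S & separated (i |: S).
Proof.
move=> [S_U0 S_disj] card_I; pose U := U0 :|: cover (E @: S).
have card_U : #|U| <= #|U0| + m * #|S|.
  apply: leq_trans (leq_card_setU _ _).1 _; rewrite leq_add2l.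
  apply: leq_trans (leq_card_cover _).1 _.
  apply: leq_trans (_ : \sum_(A in E @: S) m <= _).
    by apply: leq_sum => _ /imsetP [i _ ->]; apply: card_E.
  by rewrite sum_nat_const mulnC leq_mul2l leq_imset_card orbT.
have /existsP [i Ei_U] : [exists i, [disjoint E i & U]].
  apply/contraT; rewrite negb_exists => /forallP all_hit.
  have : #|I| <= r * #|U|.
    apply: leq_trans (card_hitting U); rewrite -cardsT subset_leq_card //.
    by apply/subsetP => i _; rewrite inE all_hit.
  by rewrite leqNgt (leq_ltn_trans (leq_mul (leqnn r) card_U)).
have E_cover j : j \in S -> E j \subset U.
  by move=> jS; rewrite subsetU // orbC bigcup_sup ?imset_f.
exists i.
  apply/negP => iS; move/negP: (E_neq0 i); apply.
  by rewrite -subset0 -(disjoint_setI0 Ei_U) subsetI subxx E_cover.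
split=> [j /setU1P [->|] | j1 j2 /setU1P [->|j1S] /setU1P [->|j2S]].
- by apply: disjointWr Ei_U; apply: subsetUl.
- exact: S_U0.
- by rewrite eqxx.
- by move=> _; apply: disjointWr Ei_U; apply: E_cover.
- by move=> _; rewrite disjoint_sym; apply: disjointWr Ei_U; apply: E_cover.
- exact: S_disj.
Qed.

Lemma separated_exists k :
  r * (#|U0| + m * k.-1) < #|I| -> exists2 S : {set I}, #|S| = k & separated S.
Proof.
elim: k => [_|k IH card_I].
  by exists set0; rewrite ?cards0 //; split=> [i|i j]; rewrite inE.
have [|S card_S sepS] := IH.
  by apply: leq_ltn_trans card_I; rewrite leq_mul2l leq_add2l leq_mul2l leq_pred !orbT.
have [|i iS sep_iS] := separated_extend sepS; first by rewrite card_S.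
by exists (i |: S); rewrite // cardsU1 iS card_S.
Qed.

Lemma separated_family t :
  r * (#|U0| + m * t.-1) < #|I| ->
  exists g : 'I_t -> I, [/\ injective g, forall j, [disjoint E (g j) & U0]
    & forall j1 j2 x, x \in E (g j1) -> x \in E (g j2) -> j1 = j2].
Proof.
move=> /separated_exists [S card_S [S_U0 S_disj]].
pose g j := enum_val (cast_ord (esym card_S) j).
have gS j : g j \in S by apply: enum_valP.
have g_inj : injective g by move=> j1 j2 /enum_val_inj /cast_ord_inj.
exists g; split=> // [j|j1 j2 x x1 x2]; first exact: S_U0.
apply: contraTeq isT => j12; have /S_disj := gS j1.
by move=> /(_ _ (gS j2) (contra_neq (@g_inj j1 j2) j12)) /disjointFr /(_ x1); rewrite x2.
Qed.

End GreedySelection.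

(* Indexing the edges of F by [K] avoids defining the hyperedge map on [{set W}] case by case;
   [edge] need not be injective. *)
Lemma berge_copy_of_param (W V K : finType) (EF : {set {set W}}) (H : {set {set V}})
    (phi : W -> V) (edge : K -> {set W}) (lab : K -> {set V}) :
  injective phi -> injective lab -> EF \subset [set edge k | k : K] ->
  (forall k, lab k \in H) -> (forall k, phi @: edge k \subset lab k) ->
  berge_copy EF H.
Proof.
move=> phi_inj lab_inj EF_edge lab_H lab_edge.
pose f e := if [pick k | edge k == e] is Some k then lab k else set0.
have fE e : e \in EF -> exists2 k, e = edge k & f e = lab k.
  move/(subsetP EF_edge)/imsetP => [k _ ek]; rewrite /f.
  case: pickP => [k' /eqP <-|/(_ k)]; first by exists k'.
  by rewrite ek eqxx.
exists phi, f; split=> // [e1 e2 /fE [k1 -> ->] /fE [k2 -> ->] /lab_inj -> //|e].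
by move=> /fE [k -> ->].
Qed.

Lemma block_labelling_inj (A J I T : finType) (L : I -> A -> T) (g : J -> I) :
  (forall i, injective (L i)) ->
  (forall j1 j2 y,
     y \in [set L (g j1) x | x : A] -> y \in [set L (g j2) x | x : A] -> j1 = j2) ->
  injective (fun k : A * J => L (g k.2) k.1).
Proof.
move=> L_inj blocks [x1 j1] [x2 j2] /= eqL.
have j12 : j1 = j2.
  by apply: (blocks _ _ (L (g j1) x1)); [|rewrite eqL]; apply: imset_f.
by move: eqL; rewrite j12 => /L_inj ->.
Qed.

Definition book_edge s (k : option (bool * 'I_s)) : {set book_V s} :=
  if k is Some (x, j) then [set inl x; inr j] else [set inl true; inl false].

Lemma book_edge_cover s : book s \subset [set book_edge k | k : option (bool * 'I_s)].
Proof.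
apply/subsetP => e; rewrite !inE.
case/orP => [/orP [/eqP -> | /imsetP [j _ ->]] | /imsetP [j _ ->]].
- by apply/imsetP; exists None.
- by apply/imsetP; exists (Some (true, j)).
- by apply/imsetP; exists (Some (false, j)).
Qed.

Definition book_embed s n (g : 'I_s -> 'I_n) (x : book_V s) : book_V n :=
  match x with inl y => inl y | inr j => inr (g j) end.

Lemma book_embed_inj s n (g : 'I_s -> 'I_n) : injective g -> injective (book_embed g).
Proof. by move=> g_inj [x|j] [y|k] //= [] => [->|/g_inj ->]. Qed.

Lemma book_embed_edge s n (g : 'I_s -> 'I_n) x j :
  book_embed g @: book_edge (Some (x, j)) = book_edge (Some (x, g j)).
Proof. by rewrite /= imsetU1 imset_set1. Qed.

Section BookOfTriangles.

Variables (V : finType) (H : {set {set V}}) (r n t : nat).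
Hypothesis H_uniform : uniform r H.
Variable phi : book_V n -> V.
Hypothesis phi_inj : injective phi.
Variables a b c : 'I_n -> {set V}.
Hypothesis abc : forall i,
  berge_triangle H (phi (inl true)) (phi (inl false)) (phi (inr i)) (a i) (b i) (c i).

(* [page i true] covers the edge u w_i of the book, [page i false] the edge v w_i. *)
Definition page i (x : bool) : {set V} := if x then c i else b i.

Lemma page_inj i : injective (page i).
Proof.
have [_ [[_ bc _] _]] := abc i.
by move=> [] [] //= eq_page; move: bc; rewrite eq_page eqxx.
Qed.

Lemma page_H i x : page i x \in H.
Proof. by have [[_ ? ?] _] := abc i; case: x. Qed.

Lemma page_edge i x : phi @: book_edge (Some (x, i)) \subset page i x.
Proof. by have [_ [_ [_ ? ?]]] := abc i; case: x; apply: imset_pair_sub. Qed.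

Lemma card_hitting_pages (U : {set {set V}}) :
  #|[set i | ~~ [disjoint [set page i x | x : bool] & U]]| <= r * #|U|.
Proof.
apply: (card_hitting_le (P := fun i => [set phi (inr i)]) H_uniform).
- by move=> i; apply/subsetP => _ /imsetP [x _ ->]; apply: page_H.
- by move=> i j y; rewrite !inE => /eqP -> /eqP /phi_inj [].
- move=> i _ /imsetP [x _ ->]; apply: (meet_not_disjoint (x := phi (inr i))).
    exact: set11.
  by apply: (subsetP (page_edge i x)); rewrite imset_f ?set22.
Qed.

Lemma berge_book_of_triangles : r * (1 + 2 * t.-1) < n -> berge_copy (book t) H.
Proof.
move=> card_n; have i0 : 'I_n := Ordinal (leq_ltn_trans (leq0n _) card_n).
have [|||g [g_inj g_a g_blocks]] :=
  @separated_family _ _ (fun i => [set page i x | x : bool]) [set a i0] 2 r _ _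
    card_hitting_pages t.
- by move=> i; apply/set0Pn; exists (page i true); apply: imset_f.
- by move=> i; apply: leq_trans (leq_imset_card _ _) _; rewrite ?cardsT card_bool.
- by rewrite cards1 card_ord.
pose lab k := if k is Some (x, j) then page (g j) x else a i0.
have page_a j x : page (g j) x != a i0.
  apply/eqP => page_a; move/disjointFr: (g_a j) => /(_ (page (g j) x)).
  by rewrite imset_f // page_a set11 => /(_ isT).
apply: (berge_copy_of_param (phi := phi \o book_embed g) (edge := @book_edge t) (lab := lab)).
- exact: inj_comp phi_inj (book_embed_inj g_inj).
- move=> [[x1 j1]|] [[x2 j2]|] //= eq_lab.
  + have := block_labelling_inj page_inj g_blocks (x1 := (x1, j1)) (x2 := (x2, j2)).
    by move=> /(_ eq_lab) [-> ->].
  + by move/eqP: eq_lab; rewrite (negbTE (page_a _ _)).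
  + by move/eqP: eq_lab; rewrite eq_sym (negbTE (page_a _ _)).
- exact: book_edge_cover.
- by case=> [[x j]|] /=; [apply: page_H | case: (abc i0) => [[]]].
- case=> [[x j]|]; first by rewrite imset_comp book_embed_edge; apply: page_edge.
  by apply: imset_pair_sub; case: (abc i0) => _ [_ []].
Qed.

End BookOfTriangles.

Definition fan_edge s (k : option bool * 'I_s) : {set fan_V s} :=
  let: (o, j) := k in
  if o is Some x then [set None; Some (x, j)] else [set Some (true, j); Some (false, j)].

Lemma fan_edge_cover s : fan s \subset [set fan_edge k | k : option bool * 'I_s].
Proof.
apply/subsetP => e; rewrite !inE.
case/orP => [/orP [/imsetP [j _ ->] | /imsetP [j _ ->]] | /imsetP [j _ ->]].
- by apply/imsetP; exists (Some true, j).
- by apply/imsetP; exists (Some false, j).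
- by apply/imsetP; exists (None, j).
Qed.

Definition fan_embed s n (g : 'I_s -> 'I_n) : fan_V s -> fan_V n :=
  omap (fun p => (p.1, g p.2)).

Lemma fan_embed_inj s n (g : 'I_s -> 'I_n) : injective g -> injective (fan_embed g).
Proof. by move=> g_inj [[x j]|] [[y k]|] //= [-> /g_inj ->]. Qed.

Lemma fan_embed_edge s n (g : 'I_s -> 'I_n) o j :
  fan_embed g @: fan_edge (o, j) = fan_edge (o, g j).
Proof. by case: o => [x|]; rewrite /= imsetU1 imset_set1. Qed.

Section FanOfTriangles.

Variables (V : finType) (H : {set {set V}}) (r n t : nat).
Hypothesis H_uniform : uniform r H.
Variable phi : fan_V n -> V.
Hypothesis phi_inj : injective phi.
Variables a b c : 'I_n -> {set V}.
Hypothesis abc : forall i,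
  berge_triangle H (phi None) (phi (Some (true, i))) (phi (Some (false, i))) (a i) (b i) (c i).

(* [blade i (Some true)], [blade i (Some false)], [blade i None] cover u v_i, u w_i, v_i w_i. *)
Definition blade i (o : option bool) : {set V} :=
  match o with Some true => a i | Some false => c i | None => b i end.

Lemma blade_inj i : injective (blade i).
Proof.
have [_ [[ab bc ac] _]] := abc i.
by move=> [[]|] [[]|] //= eq_blade; move: ab bc ac; rewrite eq_blade !eqxx.
Qed.

Lemma blade_H i o : blade i o \in H.
Proof. by have [[? ? ?] _] := abc i; case: o => [[]|]. Qed.

Lemma blade_edge i o : phi @: fan_edge (o, i) \subset blade i o.
Proof. by have [_ [_ [? ? ?]]] := abc i; case: o => [[]|]; apply: imset_pair_sub. Qed.

Lemma card_hitting_blades (U : {set {set V}}) :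
  #|[set i | ~~ [disjoint [set blade i o | o : option bool] & U]]| <= r * #|U|.
Proof.
apply: (card_hitting_le
  (P := fun i => [set phi (Some (true, i)); phi (Some (false, i))]) H_uniform).
- by move=> i; apply/subsetP => _ /imsetP [o _ ->]; apply: blade_H.
- by move=> i j y; rewrite !inE => /orP [] /eqP -> /orP [] /eqP /phi_inj [].
- move=> i _ /imsetP [o _ ->]; have [_ [_ [ua vb wc]]] := abc i.
  case: o => [[]|] /=.
  + by apply: (meet_not_disjoint (x := phi (Some (true, i)))); rewrite ?set21 //; case/andP: ua.
  + by apply: (meet_not_disjoint (x := phi (Some (false, i)))); rewrite ?set22 //; case/andP: wc.
  + by apply: (meet_not_disjoint (x := phi (Some (true, i)))); rewrite ?set21 //; case/andP: vb.
Qed.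

Lemma berge_fan_of_triangles : r * (3 * t.-1) < n -> berge_copy (fan t) H.
Proof.
move=> card_n.
have [|||g [g_inj _ g_blocks]] :=
  @separated_family _ _ (fun i => [set blade i o | o : option bool]) set0 3 r _ _
    card_hitting_blades t.
- by move=> i; apply/set0Pn; exists (blade i None); apply: imset_f.
- by move=> i; apply: leq_trans (leq_imset_card _ _) _; rewrite ?cardsT card_option card_bool.
- by rewrite cards0 card_ord.
apply: (berge_copy_of_param (phi := phi \o fan_embed g) (edge := @fan_edge t)
  (lab := fun k => blade (g k.2) k.1)).
- exact: inj_comp phi_inj (fan_embed_inj g_inj).
- exact: block_labelling_inj blade_inj g_blocks.
- exact: fan_edge_cover.
- by move=> [o j]; apply: blade_H.
- by move=> [o j]; rewrite imset_comp fan_embed_edge; apply: blade_edge.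
Qed.

End FanOfTriangles.

Theorem proposition4 (V : finType) (H : {set {set V}}) (t r : nat) :
  1 <= t -> 2 <= r -> uniform r H ->
  (berge_free (book t) H ->
   ~ exists phi : book_V (3 * r * t) -> V,
       shadow_copy (book (3 * r * t)) H phi /\
       forall i : 'I_(3 * r * t),
         berge_triangle_core H (phi (inl true)) (phi (inl false)) (phi (inr i)))
  /\
  (berge_free (fan t) H ->
   ~ exists phi : fan_V (3 * r * t) -> V,
       shadow_copy (fan (3 * r * t)) H phi /\
       forall i : 'I_(3 * r * t),
         berge_triangle_core H (phi None) (phi (Some (true, i))) (phi (Some (false, i)))).
Proof.
move=> t_gt0 r_gt1 H_uniform; split=> [book_free | fan_free] [phi [[phi_inj _] tri]].
- have /berge_triangle_choice [a [b [c abc]]] := tri.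
  by apply/book_free/(berge_book_of_triangles H_uniform phi_inj abc); nia.
- have /berge_triangle_choice [a [b [c abc]]] := tri.
  by apply/fan_free/(berge_fan_of_triangles H_uniform phi_inj abc); nia.
Qed.
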